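(* Assume the setting, algorithm $\mathrm{ALG}$ and linear program described in the context. For every $\varepsilon>0$ and every integer horizon $H\ge \max_{p\in\Pi} r_p$, $$\mathrm{ALG}\;\le\; 2\Big(\frac{2}{\varepsilon}+1\Big)\cdot \mathrm{val}(\mathcal P_{\varepsilon,H}).$$ That is, $\mathrm{ALG}$ running at unit speed is $2(2/\varepsilon+1)$-competitive against the (LP relaxation of the) optimal offline preemptive, migratory solution whose reconfigurable transmissions run at speed $1/(2+\varepsilon)$ (equivalently, $\mathrm{ALG}$ has speedup $2+\varepsilon$).
   Context: Network. $S,T,R,D$ are pairwise disjoint finite sets (sources, transmitters, receivers, destinations). Each transmitter $t\in T$ is attached to a source $s(t)\in S$ via a link of integer delay $d(s(t),t)\ge 0$; each receiver $r\in R$ is attached to a destination $d(r)\in D$ via a link of integer delay $d(r,d(r))\ge 0$. A set $E_R\subseteq T\times R$ of reconfigurable edges is given, each $e\in E_R$ with integer delay $d(e)\ge 1$ (sending an amount $s$ through $e$ takes time $s\cdot d(e)$). A set $E_\ell\subseteq S\times D$ of fixed links is given, each with integer delay $d(\cdot,\cdot)\ge0$. For $e=(t,r)\in E_R$ put $\Delta(e)=d(s(t),t)+d(e)+d(r,d(r))$. Two edges of $E_R$ are adjacent if they share a transmitter or a receiver (an edge is adjacent to itself). Packets. $\Pi$ is a finite set of unit-size packets; packet $p$ has weight $w_p>0$, release time $r_p\in\mathbb Z_{\ge1}$, source $s_p\in S$, destination $d_p\in D$. Let $E(p)=\{(t,r)\in E_R: s(t)=s_p,\ d(r)=d_p\}$;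 assume $E(p)\neq\emptyset$ for all $p$. $\Pi_\ell$ is the set of packets with $(s_p,d_p)\in E_\ell$, and for such $p$, $\ell_p:=d(s_p,d_p)$. Fix a total order $\prec$ on $\Pi$ with $r_p<r_q\Rightarrow p\prec q$ (''$p$ arrived before $q$''). Algorithm ALG. Packets are processed one by one in the order $\prec$; packet $p$ is processed at time $r_p$, before the transmission step $r_p$. A packet assigned to a reconfigurable edge $e$ is split into $d(e)$ chunks, each of size $1/d(e)$ and weight $w_p/d(e)$, all assigned to $e$; for a chunk $c$, $p(c)$ is its packet, $w_c$ its weight, $e(c)$ its edge. A chunk is pending until it is transmitted. For a set $C$ of chunks, $W(C)$ is its total weight. When $p$ is processed, let $B(p)$ be the set of pending chunks of packets $p'\prec p$. For $e=(t,r)\in E(p)$ let $\mathrm{Adj}(p,e)$ be the chunks of $B(p)$ whose edge is adjacent to $e$, $H(p,e)=\{c\in \mathrm{Adj}(p,e): w_c\ge w_p/d(e)\}$, $L(p,e)=\mathrm{Adj}(p,e)\setminus H(p,e)$, and $$\mathrm{imp}(p,e)=w_p\Big(d(s_p,t)+\tfrac{d(e)+1}{2}+d(r,d_p)\Big)+w_p\,|H(p,e)|+d(e)\,W(L(p,e)).$$ Let $e^*\in\arg\min_{e\in E(p)}\mathrm{imp}(p,e)$. If $p\in\Pi_\ell$ and $w_p\ell_p\le \mathrm{imp}(p,e^* )$, $p$ is sent over its fixed link (latency $w_p\ell_p$); otherwise $p$ is assigned to $e(p):=e^*$ and split into chunks. Scheduler: at each integer time $\tau\ge1$ (after processing the packets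 released at $\tau$), build $M_\tau$ greedily: start with $M_\tau=\emptyset$ and go through all pending chunks in order of decreasing weight, ties broken by $\prec$ on their packets (ties among chunks of the same packet arbitrary), adding a chunk $c$ to $M_\tau$ iff no chunk already in $M_\tau$ has an edge adjacent to $e(c)$. The chunks of $M_\tau$ are transmitted at step $\tau$ (and cease to be pending). If chunk $c$ of $p$ is transmitted at step $\tau_c$ via $e(p)=(t,r)$, its completion time is $f_c=\tau_c+1+d(s_p,t)+d(r,d_p)$, and $c$ is active at integer times $\tau$ with $r_p\le\tau<f_c$. The cost is $\mathrm{ALG}=\sum_{p\text{ sent on fixed link}}w_p\ell_p+\sum_{\text{chunks }c}w_c\,(f_c-r_{p(c)})$. Linear program. For $\varepsilon>0$ and integer $H\ge\max_p r_p$, $\mathcal P_{\varepsilon,H}$ has variables $x_{p,e,\tau}\ge0$ ($p\in\Pi$, $e\in E(p)$, $\tau\in\{r_p,\dots,H\}$) and $y_p\ge0$ ($p\in\Pi_\ell$): minimize $\sum_{p}\sum_{e\in E(p)}\sum_{\tau} w_p x_{p,e,\tau}(\tau+\Delta(e)-r_p)+\sum_{p\in\Pi_\ell}w_p\ell_p y_p$ subject to $\sum_{e,\tau}x_{p,e,\tau}+y_p\ge1$ for $p\in\Pi_\ell$; $\sum_{e,\tau}x_{p,e,\tau}\ge1$ for $p\notin\Pi_\ell$; for every $\tau$ and $t\in T$: $\sum_{r}\sum_{p: r_p\le\tau,(t,r)\in E(p)}d(t,r)\,x_{p,(t,r),\tau}\le\frac1{2+\varepsilon}$; for every $\tau$ and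 $r\in R$: $\sum_{t}\sum_{p:r_p\le\tau,(t,r)\in E(p)}d(t,r)\,x_{p,(t,r),\tau}\le\frac1{2+\varepsilon}$. $\mathrm{val}(\mathcal P_{\varepsilon,H})$ denotes its optimal value ($+\infty$ if infeasible). *)

From HB Require Import structures.
From mathcomp Require Import all_boot all_order all_algebra.
From mathcomp Require Import boolp classical_sets reals constructive_ereal ereal.
Set Implicit Arguments. Unset Strict Implicit. Unset Printing Implicit Defensive.
Import Order.TTheory GRing.Theory Num.Theory.
Local Open Scope ring_scope.

(* S sources, T transmitters, Rv receivers, D destinations, P packets *)
Record network (R : realType) (S T Rv D P : finType) := Network {
  srcT : T -> S;
  dST  : T -> nat;           (* d(s(t),t) *)
  dstR : Rv -> D;
  dRD  : Rv -> nat;          (* d(r,d(r)) *)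
  ER   : {set T * Rv};       (* reconfigurable edges *)
  dE   : T * Rv -> nat;
  El   : {set S * D};        (* fixed links *)
  dl   : S * D -> nat;       (* delay of a fixed link *)
  wt   : P -> R;
  rls  : P -> nat;
  psrc : P -> S;
  pdst : P -> D;
  rk   : P -> nat            (* p < q  iff  rk p < rk q  (the total order "prec") *)
}.

Section Defs.
Variables (R : realType) (S T Rv D P : finType) (N : network R S T Rv D P).

Definition Ep (p : P) : {set T * Rv} :=
  [set e in ER N | (srcT N e.1 == psrc N p) && (dstR N e.2 == pdst N p)].

Definition inPl (p : P) : bool := (psrc N p, pdst N p) \in El N.
Definition ellp (p : P) : nat := dl N (psrc N p, pdst N p).

Definition Delta (e : T * Rv) : nat := dST N e.1 + dE N e + dRD N e.2.

Definition valid_network : Prop :=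
  [/\ (forall e, e \in ER N -> (1 <= dE N e)%N),
      (forall p, 0 < wt N p),
      (forall p, (1 <= rls N p)%N),
      (forall p, exists e, e \in Ep p) &
      (injective (rk N) /\
       (forall p q, (rls N p < rls N q)%N -> (rk N p < rk N q)%N))].

Definition adjacent (e e' : T * Rv) : bool := (e.1 == e'.1) || (e.2 == e'.2).

(* A run of ALG: the decision for every packet (None = fixed link,    *)
(* Some e = assigned to reconfigurable edge e) and the transmission   *)
(* step tx p k of the k-th chunk (k < d(e(p))) of packet p.           *)
Record run := Run { dec : P -> option (T * Rv); tx : P -> nat -> nat }.

Variable A : run.

Definition nch (p : P) : nat :=
  if dec A p is Some e then dE N e else 0%N.

Definition cw (p : P) : R := wt N p / (nch p)%:R.

Definition adj_dec (p : P) (e : T * Rv) : bool :=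
  if dec A p is Some e' then adjacent e' e else false.

Definition chunk_before (p' : P) (k' : nat) (p : P) (k : nat) : bool :=
  (cw p < cw p') ||
  ((cw p' == cw p) && ((rk N p' < rk N p)%N || ((p' == p) && (k' < k)%N))).

(* B(p): pending chunks (p',k') of packets p' prec p at the processing time
   r_p of p (before transmission step r_p). |H(p,e)| and W(L(p,e)). *)
Definition Hcount (p : P) (e : T * Rv) : nat :=
  \sum_(p' | (rk N p' < rk N p)%N) \sum_(k < nch p')
     (if [&& (rls N p <= tx A p' k)%N, adj_dec p' e
            & wt N p / (dE N e)%:R <= cw p' :> R] then 1%N else 0%N).

Definition WL (p : P) (e : T * Rv) : R :=
  \sum_(p' | (rk N p' < rk N p)%N) \sum_(k < nch p')
     (if [&& (rls N p <= tx A p' k)%N, adj_dec p' e & cw p' < wt N p / (dE N e)%:R]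
      then cw p' else 0).

Definition imp (p : P) (e : T * Rv) : R :=
  wt N p * ((dST N e.1)%:R + ((dE N e)%:R + 1) / 2 + (dRD N e.2)%:R)
  + wt N p * (Hcount p e)%:R + (dE N e)%:R * WL p e.

Definition dec_ok (p : P) : Prop :=
  match dec A p with
  | None => exists e, [/\ e \in Ep p, (forall e', e' \in Ep p -> imp p e <= imp p e'),
                         inPl p & wt N p * (ellp p)%:R <= imp p e]
  | Some e => [/\ e \in Ep p, (forall e', e' \in Ep p -> imp p e <= imp p e') &
                 ~ (inPl p /\ wt N p * (ellp p)%:R <= imp p e)]
  end.

(* Greedy scheduler: chunk (p,k) is pending at steps rls p .. tx p k;
   at every step tau at which it is pending it belongs to M_tau (i.e. it is
   transmitted, tau = tx p k) iff no chunk earlier in the scheduler order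
   that belongs to M_tau (transmitted at tau) has an edge adjacent to e(p). *)
Definition sched_ok : Prop :=
  forall p e, dec A p = Some e -> forall k, (k < dE N e)%N ->
    (rls N p <= tx A p k)%N /\
    forall tau, (rls N p <= tau <= tx A p k)%N ->
      (tx A p k = tau <->
       ~ exists p' e' k', [/\ dec A p' = Some e', (k' < dE N e')%N,
                             tx A p' k' = tau, chunk_before p' k' p k & adjacent e' e]).

Definition is_ALG_run : Prop := (forall p, dec_ok p) /\ sched_ok.

Definition fin (p : P) (k : nat) : nat :=
  if dec A p is Some e then (tx A p k + 1 + dST N e.1 + dRD N e.2)%N else 0%N.

Definition ALGcost : R :=
  \sum_(p | dec A p == None) wt N p * (ellp p)%:R
  + \sum_p \sum_(k < nch p) cw p * ((fin p k)%:R - (rls N p)%:R).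

End Defs.

Section LP.
Variables (R : realType) (S T Rv D P : finType) (N : network R S T Rv D P).
Variables (eps : R) (H : nat).

(* variables x_{p,e,tau} (e in E(p), rls p <= tau <= H) and y_p (p in Pi_ell) *)
Definition sumx (x : P -> T * Rv -> nat -> R) (p : P) : R :=
  \sum_(e in Ep N p) \sum_(rls N p <= tau < H.+1) x p e tau.

Definition LPobj (x : P -> T * Rv -> nat -> R) (y : P -> R) : R :=
  \sum_p \sum_(e in Ep N p) \sum_(rls N p <= tau < H.+1)
      wt N p * x p e tau * ((tau + Delta N e)%:R - (rls N p)%:R)
  + \sum_(p | inPl N p) wt N p * (ellp N p)%:R * y p.

Definition LPfeasible (x : P -> T * Rv -> nat -> R) (y : P -> R) : Prop :=
  [/\ (forall p e tau, e \in Ep N p -> (rls N p <= tau <= H)%N -> 0 <= x p e tau),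
      (forall p, inPl N p -> 0 <= y p),
      (forall p, inPl N p -> 1 <= sumx x p + y p),
      (forall p, ~~ inPl N p -> 1 <= sumx x p) &
      (forall tau (t : T), (tau <= H)%N ->
         \sum_(rv : Rv) \sum_(p | (rls N p <= tau)%N && ((t, rv) \in Ep N p))
            (dE N (t, rv))%:R * x p (t, rv) tau <= 1 / (2 + eps)) /\
      (forall tau (rv : Rv), (tau <= H)%N ->
         \sum_(t : T) \sum_(p | (rls N p <= tau)%N && ((t, rv) \in Ep N p))
            (dE N (t, rv))%:R * x p (t, rv) tau <= 1 / (2 + eps))].

(* val(P_{eps,H}): infimum of the objective over feasible points (+oo if none) *)
Definition LPval : \bar R :=
  ereal_inf [set z : \bar R | exists x y, LPfeasible x y /\ z = (LPobj x y)%:E].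

End LP.

From HB Require Import structures.
From mathcomp Require Import all_boot all_order all_algebra.
From mathcomp Require Import boolp classical_sets reals constructive_ereal ereal.
From mathcomp Require Import zify ring lra.
Set Implicit Arguments. Unset Strict Implicit. Unset Printing Implicit Defensive.
Import Order.TTheory GRing.Theory Num.Theory.
Local Open Scope ring_scope.

(* The proof is a charging / dual-fitting argument in two halves.
   - Charging.  Give every packet p the charge imp(p, e(p)) if ALG put it on a
     reconfigurable edge, and w_p l_p otherwise.  By the greedy rule, at every
     step a chunk c waits, some chunk adjacent to it and earlier in the scheduler
     order is sent.  Blockers of the same packet account for the index of c,
     blockers of earlier packets are counted in H(p,e), and the weight of a chunk
     blocked by a later packet p' is counted in L(p',e(p')); hence
     ALG <= sum_p charge(p)                                 [ALG_le_charges].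
   - Dual fitting.  Since ALG picks the edge of minimal imp, for all e in E(p)
     and tau >= r_p, charge(p) <= 2 w_p (tau + Delta(e) - r_p) + d(e) times the
     weight pending at tau on the two ports of e          [charge_le_lp_term],
     because at most one chunk per port is sent per step.  Multiplying by the
     LP variables, using the covering and capacity constraints and the fact
     that the total pending weight is at most ALG gives
     ALG <= 2 LP + 2 ALG / (2 + eps), i.e. the claim      [ALG_le_lp_obj]. *)

Lemma sum_nat_eq_indicator (m n a : nat) :
  (\sum_(m <= i < n) (a == i) = (m <= a < n))%N.
Proof.
elim: n => [|n IH]; first by rewrite big_geq //; lia.
case: (leqP m n) => hmn; last by rewrite big_geq //; lia.
rewrite big_nat_recr //= IH; case: (eqVneq a n) => [->|hn] /=; lia.
Qed.

Lemma sum_ord_interval_le (r x n : nat) :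
  (\sum_(i < n) (r <= i <= x) <= x.+1 - r)%N.
Proof.
suff -> : (\sum_(i < n) (r <= i <= x) = minn n x.+1 - r)%N by lia.
elim: n => [|n IH]; first by rewrite big_ord0; lia.
rewrite big_ord_recr /= IH; case: (leqP r n) => h1; case: (leqP n x) => h2 /=; lia.
Qed.

Lemma sum_ord_lt (n k : nat) : (\sum_(j < n) (j < k) = minn n k)%N.
Proof.
elim: n => [|n IH]; first by rewrite big_ord0; lia.
rewrite big_ord_recr /= IH; case: (ltnP n k) => h /=; lia.
Qed.

(* Gauss' formula 0 + 1 + ... + (n - 1) = n (n - 1) / 2, written without division. *)
Lemma sum_ord_natr (R : comNzRingType) (n : nat) :
  (\sum_(k < n) (k%:R : R)) * 2 = n%:R * (n%:R - 1).
Proof.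
elim: n => [|n IH]; first by rewrite big_ord0 !mul0r.
rewrite big_ord_recr /= mulrDl IH -natr1; ring.
Qed.

Lemma sum_indicator_le1 (I : finType) (D Q : pred I) :
  (forall i j, D i -> D j -> Q i -> Q j -> i = j) ->
  (\sum_(i | D i) (Q i : nat) <= 1)%N.
Proof.
move=> hQ; rewrite (eq_bigr (fun i => if Q i then 1%N else 0%N)) //.
rewrite -big_mkcondr sum1dep_card; apply/card_le1_eqP => i j.
by rewrite !inE => /andP [Di Qi] /andP [Dj Qj]; exact: hQ.
Qed.

Lemma sum_fst_fiber (M : nmodType) (U V : finType) (g : U * V -> M) (u : U) :
  \sum_(e | e.1 == u) g e = \sum_(v : V) g (u, v).
Proof.
transitivity (\sum_(i | i == u) \sum_(v : V) g (i, v)); last by rewrite big_pred1_eq.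
by rewrite pair_big_dep /=; apply: eq_big => [[i j]|[i j]] //=; rewrite andbT.
Qed.

Lemma sum_snd_fiber (M : nmodType) (U V : finType) (g : U * V -> M) (v : V) :
  \sum_(e | e.2 == v) g e = \sum_(u : U) g (u, v).
Proof.
rewrite [RHS](eq_bigr (fun u => \sum_(j | j == v) g (u, j))); last first.
  by move=> u _; rewrite big_pred1_eq.
by rewrite pair_big_dep /=; apply: eq_big => [[i j]|[i j]].
Qed.

(* A blocking chunk of weight cw is either heavy (w / d <= cw, counted once with
   weight w) or light (counted with weight d * cw); either way its contribution is
   at most w if it is sent before tau, and at most d * cw if it is still pending. *)
Lemma threshold_charge_le (R : realFieldType) (w d cw : R) (started sent_early adj : bool) :
  0 < d -> 0 <= cw -> 0 < w ->
  w * ((if [&& started, adj & w / d <= cw] then 1%N else 0%N)%:R)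
  + d * (if [&& started, adj & cw < w / d] then cw else 0)
  <= w * (((started && sent_early) && adj : nat)%:R)
     + d * (if (~~ sent_early) && adj then cw else 0).
Proof.
move=> hd hc hw; rewrite [w / d <= _]ler_pdivrMr // [_ < w / d]ltr_pdivlMr //.
have hx : 0 <= d * cw by rewrite mulr_ge0 // ltW.
by case: started; case: sent_early; case: adj => /=; case: (leP w (cw * d)) => h /=;
  rewrite ?mulr0 ?mulr1 ?addr0 ?add0r //; lra.
Qed.

(* The same contribution is nonnegative, which covers the non-blocking chunks. *)
Lemma threshold_charge_ge0 (R : realFieldType) (w d cw : R) (b b' : bool) :
  0 <= d -> 0 <= cw -> 0 <= w ->
  0 <= w * ((b : nat)%:R) + d * (if b' then cw else 0).
Proof.
move=> hd hc hw; apply: addr_ge0; first by rewrite mulr_ge0 // ler0n.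
by case: b'; rewrite ?mulr0 // mulr_ge0.
Qed.

(* The service part of imp(p,e), plus twice the time already waited, is at most
   twice the full LP latency of sending p on e at a later step. *)
Lemma service_latency_le (R : realFieldType) (w a b d s B : R) :
  0 < w -> 0 <= a -> 0 <= b -> 1 <= d -> 0 <= s ->
  w * (a + (d + 1) / 2 + b) + (w * (2 * s) + d * B) <= 2 * w * (s + a + d + b) + d * B.
Proof.
move=> hw ha hb hd hs.
have : w * (a + (d + 1) / 2 + b + 2 * s) <= w * (2 * (s + a + d + b)).
  by apply: ler_wpM2l; [exact: ltW | lra].
lra.
Qed.

Section Analysis.
Variables (R : realType) (S T Rv D P : finType) (N : network R S T Rv D P).
Variable A : run T Rv P.
Hypotheses (hN : valid_network N) (hA : is_ALG_run N A).

(* Default edge, only used to give a total meaning to "the edge of packet p". *)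
Variable e0 : T * Rv.

(* Chunks: chunk k of packet p is the pair (p, k); since the number of chunks
   varies between packets, the index ranges over 'I_max_chunks and the chunks
   that really exist are singled out by is_chunk. *)
Definition max_chunks : nat := (\max_(p : P) nch N A p)%N.
Definition chunk : finType := (P * 'I_max_chunks)%type.
Definition is_chunk (c : chunk) : bool := (c.2 < nch N A c.1)%N.
Definition sent (c : chunk) : nat := tx A c.1 c.2.
Definition edge (p : P) : T * Rv := odflt e0 (dec A p).

Lemma big_chunks (U : Type) (idx : U) (op : Monoid.com_law idx) (Q : pred P)
    (F : P -> nat -> U) :
  \big[op/idx]_(p | Q p) \big[op/idx]_(k < nch N A p) F p k =
  \big[op/idx]_(c : chunk | Q c.1 && is_chunk c) F c.1 c.2.
Proof.
rewrite (eq_bigr (fun p => \big[op/idx]_(k < max_chunks | (k < nch N A p)%N) F p k)).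
  by rewrite pair_big_dep.
by move=> p _; rewrite (big_ord_widen max_chunks (F p)) // /max_chunks leq_bigmax.
Qed.

Lemma sum_chunks (F : P -> nat -> R) :
  \sum_(p : P) \sum_(k < nch N A p) F p k = \sum_(c : chunk | is_chunk c) F c.1 c.2.
Proof. exact: (big_chunks _ xpredT). Qed.

Lemma nchE p e : dec A p = Some e -> nch N A p = dE N e.
Proof. by rewrite /nch => ->. Qed.

Lemma chunk_dec c : is_chunk c -> dec A c.1 = Some (edge c.1).
Proof. by rewrite /is_chunk /nch /edge; case: (dec A c.1). Qed.

Lemma dec_in p e : dec A p = Some e -> e \in Ep N p.
Proof. by case: hA => /(_ p) + _; rewrite /dec_ok => + h; rewrite h => -[]. Qed.

Lemma dE_pos p e : e \in Ep N p -> (1 <= dE N e)%N.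
Proof. by case: hN => h _ _ _ _; rewrite /Ep inE => /andP [he _]; exact: h. Qed.

Lemma wt_gt0 p : 0 < wt N p.
Proof. by case: hN => _ h _ _ _. Qed.

Lemma cw_eq p e : dec A p = Some e -> cw N A p = wt N p / (dE N e)%:R.
Proof. by move=> h; rewrite /cw (nchE h). Qed.

Lemma cw_ge0 p : 0 <= cw N A p.
Proof. by rewrite /cw divr_ge0 // ltW // wt_gt0. Qed.

Lemma adjacentC (e e' : T * Rv) : adjacent e e' = adjacent e' e.
Proof. by rewrite /adjacent eq_sym [e.2 == _]eq_sym. Qed.

Lemma adj_dec_chunk c e : is_chunk c -> adj_dec A c.1 e = adjacent (edge c.1) e.
Proof. by move/chunk_dec; rewrite /adj_dec => ->. Qed.

Lemma rk_inj : injective (rk N).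
Proof. by case: hN => _ _ _ _ []. Qed.

Lemma rk_rls p q : (rk N p < rk N q)%N -> (rls N p <= rls N q)%N.
Proof. case: hN => _ _ _ _ [_ h] hpq; rewrite leqNgt; apply/negP => /h; lia. Qed.

Lemma chunk_sched c : is_chunk c ->
  (rls N c.1 <= sent c)%N /\
    forall tau, (rls N c.1 <= tau <= sent c)%N ->
      (sent c = tau <->
       ~ exists p' e' k', [/\ dec A p' = Some e', (k' < dE N e')%N,
                             tx A p' k' = tau, chunk_before N A p' k' c.1 c.2 &
                             adjacent e' (edge c.1)]).
Proof.
move=> hc; have hs := chunk_dec hc.
case: hA => _ /(_ c.1 (edge c.1) hs c.2); apply.
by move: hc; rewrite /is_chunk (nchE hs).
Qed.

Lemma chunk_before_total (c1 c2 : chunk) : c1 != c2 ->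
  chunk_before N A c1.1 c1.2 c2.1 c2.2 || chunk_before N A c2.1 c2.2 c1.1 c1.2.
Proof.
case: c1 c2 => [p1 k1] [p2 k2] /= hne; rewrite /chunk_before.
case: (ltgtP (cw N A p2) (cw N A p1)) => //= heq.
case: (eqVneq p1 p2) => [e|hp].
  subst p2; rewrite ltnn /=.
  have hk : k1 != k2 by apply: contraNneq hne => ->.
  by case: (ltngtP k1 k2) => // /val_inj e; rewrite e eqxx in hk.
have : rk N p1 != rk N p2 by apply: contra hp => /eqP /rk_inj ->.
by rewrite !andFb !orbF; case: (ltngtP (rk N p1) (rk N p2)).
Qed.

Lemma chunk_before_le p' k' p k : chunk_before N A p' k' p k -> cw N A p <= cw N A p'.
Proof. by case/orP => [/ltW // | /andP [/eqP -> _]]. Qed.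

Lemma chunk_before_lt p' k' p k : (rk N p < rk N p')%N -> chunk_before N A p' k' p k ->
  cw N A p < cw N A p'.
Proof.
move=> hr; case/orP => // /andP [_ /orP [h|/andP [/eqP e _]]]; first lia.
by subst p'; rewrite ltnn in hr.
Qed.

Lemma chunk_before_same p k' k : chunk_before N A p k' p k -> (k' < k)%N.
Proof.
case/orP; first by rewrite ltxx.
by case/andP => _ /orP [|/andP [_ ->]] //; rewrite ltnn.
Qed.

(* Every set M_tau is a matching: two distinct chunks sent at the same step
   have non-adjacent edges. *)
Lemma sent_together (c1 c2 : chunk) : is_chunk c1 -> is_chunk c2 ->
  sent c1 = sent c2 -> adjacent (edge c1.1) (edge c2.1) -> c1 = c2.
Proof.
move=> v1 v2 ht hadj; apply/eqP; apply/negPn/negP => hne.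
wlog hb : c1 c2 v1 v2 ht hadj hne / chunk_before N A c1.1 c1.2 c2.1 c2.2.
  move=> W; case/orP: (chunk_before_total hne) => hb; first exact: (W c1 c2).
  by apply: (W c2 c1) => //; rewrite 1?adjacentC 1?eq_sym.
have [hr hall] := chunk_sched v2.
have [hsent _] := hall (sent c2) (introT andP (conj hr (leqnn _))).
apply: (hsent erefl); have hs1 := chunk_dec v1.
exists c1.1, (edge c1.1), (nat_of_ord c1.2); split=> //.
by move: v1; rewrite /is_chunk (nchE hs1).
Qed.

Definition blocks (c' c : chunk) : bool :=
  [&& (rls N c.1 <= sent c')%N, (sent c' < sent c)%N, adj_dec A c'.1 (edge c.1)
    & chunk_before N A c'.1 c'.2 c.1 c.2].

(* Greedy scheduling: at every step at which c waits, some blocking chunk is sent,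
   so the waiting time of c is at most the number of its blockers. *)
Lemma wait_le_blockers c : is_chunk c ->
  (sent c - rls N c.1 <= \sum_(c' | is_chunk c') blocks c' c)%N.
Proof.
move=> hc; have [hr hall] := chunk_sched hc.
rewrite -[(sent c - _)%N]muln1 -sum_nat_const_nat.
apply: (@leq_trans (\sum_(rls N c.1 <= tau < sent c)
                     \sum_(c' | is_chunk c') ((sent c' == tau) && blocks c' c))%N).
  rewrite big_nat [X in (_ <= X)%N]big_nat; apply: leq_sum => tau /andP [h1 h2].
  have hne : sent c <> tau by move=> e; rewrite e ltnn in h2.
  have [[p' [e' [k' [hd hk ht hb ha]]]]|hnex] := pselect (exists p' e' k',
    [/\ dec A p' = Some e', (k' < dE N e')%N, tx A p' k' = tau,
        chunk_before N A p' k' c.1 c.2 & adjacent e' (edge c.1)]); last first.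
    by exfalso; apply: hne; apply/(hall tau); [rewrite h1 ltnW | ].
  have hkK : (k' < max_chunks)%N.
    by apply: (leq_trans hk); rewrite -(nchE hd) /max_chunks leq_bigmax.
  pose c' : chunk := (p', Ordinal hkK).
  have vc' : is_chunk c' by rewrite /is_chunk /= (nchE hd).
  rewrite (bigD1 c') //=; apply: leq_trans (leq_addr _ _).
  by rewrite /sent /= ht eqxx /blocks /sent /= ht h1 h2 /adj_dec hd ha hb.
rewrite exchange_big /=; apply: leq_sum => c' _.
case hbk: (blocks c' c); last by rewrite big1 // => i _; rewrite andbF.
under eq_bigr => tau _ do rewrite andbT.
by rewrite sum_nat_eq_indicator; move: hbk => /and4P [-> -> _ _].
Qed.

Lemma blocks_split (c' c : chunk) : (blocks c' c : nat) =
  ((c'.1 == c.1) && blocks c' c + (rk N c'.1 < rk N c.1)%N && blocks c' c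
   + (rk N c.1 < rk N c'.1)%N && blocks c' c)%N.
Proof.
case: (blocks c' c); rewrite ?andbF ?andbT //.
case: (eqVneq c'.1 c.1) => [->|hne]; first by rewrite ltnn.
have : rk N c'.1 != rk N c.1 by apply: contra hne => /eqP /rk_inj ->.
by case: (ltngtP (rk N c'.1) (rk N c.1)).
Qed.

Lemma same_packet_blockers c :
  (\sum_(c' | is_chunk c') ((c'.1 == c.1) && blocks c' c) <= c.2)%N.
Proof.
apply: (@leq_trans (\sum_(c' : chunk) ((c'.1 == c.1) && (c'.2 < c.2)))%N).
  rewrite big_mkcond; apply: leq_sum => c' _.
  case: (is_chunk c') => //=; case: (eqVneq c'.1 c.1) => [e|] //=.
  case hb: (blocks c' c) => //=; move: hb => /and4P [_ _ _].
  by case: c' e => p' k' /= ->; move/chunk_before_same => ->.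
rewrite -(pair_bigA _ (fun p (j : 'I_max_chunks) => ((p == c.1) && (j < c.2)%N) : nat)).
rewrite (bigD1 c.1) //= [X in (_ + X)%N]big1 ?addn0; last first.
  by move=> p hp; rewrite big1 // => j _; rewrite (negbTE hp).
under eq_bigr => j _ do rewrite eqxx.
by rewrite sum_ord_lt geq_minr.
Qed.

(* Blockers from earlier packets are pending when p(c) is processed and at least
   as heavy as the chunks of p(c): they are counted in H(p(c), e(p(c))). *)
Lemma earlier_blockers c : is_chunk c ->
  (\sum_(c' | is_chunk c') ((rk N c'.1 < rk N c.1)%N && blocks c' c)
   <= Hcount N A c.1 (edge c.1))%N.
Proof.
move=> hc; rewrite /Hcount (big_chunks addn (fun p' => (rk N p' < rk N c.1)%N)
   (fun p' k => if [&& (rls N c.1 <= tx A p' k)%N, adj_dec A p' (edge c.1)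
            & wt N c.1 / (dE N (edge c.1))%:R <= cw N A p'] then 1%N else 0%N)).
rewrite big_mkcond [X in (_ <= X)%N]big_mkcond; apply: leq_sum => c' _.
rewrite andbC; case: (is_chunk c') => //=.
case: (rk N c'.1 < rk N c.1)%N => /=; last by rewrite andbF.
case hb: (blocks c' c) => //=; move: hb => /and4P [h1 _ h3 h4].
by rewrite h1 h3 -(cw_eq (chunk_dec hc)) (chunk_before_le h4).
Qed.

(* If c' blocks a chunk c of a later packet, then c is pending when p(c') is
   processed and strictly lighter than the chunks of p(c'): the weight of c is
   counted in L(p(c'), e(p(c'))). *)
Lemma later_blocked c' : is_chunk c' ->
  \sum_(c | is_chunk c) cw N A c.1 * (((rk N c.1 < rk N c'.1)%N && blocks c' c : nat)%:R)
  <= WL N A c'.1 (edge c'.1).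
Proof.
move=> hc'; rewrite /WL (big_chunks _ (fun p => (rk N p < rk N c'.1)%N)
   (fun p k => if [&& (rls N c'.1 <= tx A p k)%N, adj_dec A p (edge c'.1)
            & cw N A p < wt N c'.1 / (dE N (edge c'.1))%:R] then cw N A p else 0)).
rewrite big_mkcond [X in (_ <= X)]big_mkcond; apply: ler_sum => c _.
case hc: (is_chunk c); rewrite ?andbF ?andbT //=.
case hr: (rk N c.1 < rk N c'.1)%N; rewrite ?andbF ?andbT /= ?mulr0 //.
case hb: (blocks c' c) => /=; last by rewrite mulr0; case: ifP => // _; exact: cw_ge0.
move: hb => /and4P [_ h2 h3 h4]; have [hr' _] := chunk_sched hc'.
rewrite mulr1 ifT //; apply/and3P; split.
- exact: ltnW (leq_ltn_trans hr' h2).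
- by move: h3; rewrite !adj_dec_chunk // adjacentC.
- by rewrite -(cw_eq (chunk_dec hc')); exact: (chunk_before_lt hr h4).
Qed.

Lemma weighted_wait_le :
  \sum_(c | is_chunk c) cw N A c.1 * (sent c - rls N c.1)%:R <=
  \sum_(c | is_chunk c) (cw N A c.1 * (c.2 : nat)%:R
     + cw N A c.1 * (Hcount N A c.1 (edge c.1))%:R + WL N A c.1 (edge c.1)).
Proof.
apply: (@le_trans _ _ (\sum_(c | is_chunk c) \sum_(c' | is_chunk c')
           cw N A c.1 * (blocks c' c : nat)%:R)).
  apply: ler_sum => c hc; rewrite -mulr_sumr -natr_sum.
  by apply: (ler_wpM2l (cw_ge0 _)); rewrite ler_nat; exact: wait_le_blockers.
under eq_bigr => c _ do under eq_bigr => c' _ do rewrite blocks_split !natrD !mulrDr.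
under eq_bigr => c _ do rewrite !big_split /=.
rewrite !big_split /=; apply: lerD; first apply: lerD.
- apply: ler_sum => c hc; rewrite -mulr_sumr -natr_sum.
  by apply: (ler_wpM2l (cw_ge0 _)); rewrite ler_nat; exact: same_packet_blockers.
- apply: ler_sum => c hc; rewrite -mulr_sumr -natr_sum.
  by apply: (ler_wpM2l (cw_ge0 _)); rewrite ler_nat; exact: earlier_blockers.
- by rewrite exchange_big /=; apply: ler_sum => c' hc'; exact: later_blocked.
Qed.

Definition charge (p : P) : R :=
  if dec A p is Some e then imp N A p e else wt N p * (ellp N p)%:R.

Lemma chunk_latency c : is_chunk c ->
  (fin N A c.1 c.2)%:R - (rls N c.1)%:R =
  (1 + dST N (edge c.1).1 + dRD N (edge c.1).2)%:R + (sent c - rls N c.1)%:R :> R.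
Proof.
move=> hc; have [hr _] := chunk_sched hc.
by rewrite /fin (chunk_dec hc) natrB // -/(sent c) !natrD; ring.
Qed.

(* Summed over the chunks of p, the service times, the chunk indices (the
   same-packet waiting) and the two queue terms add up exactly to imp(p,e). *)
Lemma packet_charge_eq p e : dec A p = Some e ->
  \sum_(k < dE N e) (cw N A p * (1 + dST N e.1 + dRD N e.2)%:R
     + (cw N A p * k%:R + cw N A p * (Hcount N A p e)%:R + WL N A p e)) = imp N A p e.
Proof.
move=> hd; have hd1 : (1 <= dE N e)%N := dE_pos (dec_in hd).
rewrite !big_split /= !sumr_const card_ord -mulr_sumr.
set d : R := (dE N e)%:R.
have natmulE (x : R) : x *+ dE N e = x * d by rewrite mulr_natr.
rewrite !natmulE.
have hdz : d != 0 by rewrite pnatr_eq0 -lt0n.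
have -> : \sum_(k < dE N e) (k%:R : R) = d * (d - 1) / 2.
  by rewrite -sum_ord_natr mulfK // pnatr_eq0.
by rewrite (cw_eq hd) /imp -/d !natrD; field.
Qed.

Lemma ALG_le_charges : ALGcost N A <= \sum_p charge p.
Proof.
rewrite /ALGcost (sum_chunks (fun p k => cw N A p * ((fin N A p k)%:R - (rls N p)%:R))).
under [X in _ + X]eq_bigr => c hc do rewrite (chunk_latency hc) mulrDr.
rewrite big_split /= addrA; apply: le_trans (lerD (lexx _) weighted_wait_le) _.
rewrite -addrA -big_split /= -(sum_chunks (fun p k =>
   cw N A p * (1 + dST N (edge p).1 + dRD N (edge p).2)%:R
   + (cw N A p * k%:R + cw N A p * (Hcount N A p (edge p))%:R + WL N A p (edge p)))).
rewrite big_mkcond -big_split /=; apply: ler_sum => p _.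
rewrite /charge; case hd: (dec A p) => [e|] /=; last by rewrite /nch hd big_ord0 addr0.
by rewrite add0r (nchE hd) /edge hd (packet_charge_eq hd).
Qed.

Lemma charge_ge0 p : 0 <= charge p.
Proof.
have hw := ltW (wt_gt0 p).
rewrite /charge; case: (dec A p) => [e|]; last by rewrite mulr_ge0.
rewrite /imp !addr_ge0 ?mulr_ge0 ?divr_ge0 ?addr_ge0 //.
by apply: sumr_ge0 => p' _; apply: sumr_ge0 => k _; case: ifP => // _; exact: cw_ge0.
Qed.

Lemma charge_le_imp p e : e \in Ep N p -> charge p <= imp N A p e.
Proof.
move=> he; case: hA => /(_ p) + _; rewrite /dec_ok /charge.
case: (dec A p) => [e1 [_ hmin _]|[e1 [_ hmin _ hl]]]; first exact: hmin.
exact: le_trans hl (hmin _ he).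
Qed.

Lemma charge_le_fixed p : inPl N p -> charge p <= wt N p * (ellp N p)%:R.
Proof.
move=> hp; case: hA => /(_ p) + _; rewrite /dec_ok /charge.
case: (dec A p) => [e [_ _ hn]|[e1 _]] //.
by rewrite leNgt; apply/negP => h; apply: hn; split => //; exact: ltW.
Qed.

Definition pend (K : finType) (key : T * Rv -> K) (k : K) (tau : nat) : R :=
  \sum_(c | is_chunk c)
    (if (rls N c.1 <= tau <= sent c)%N && (key (edge c.1) == k) then cw N A c.1 else 0).

(* Edges sharing a transmitter (or a receiver) are adjacent, so by
   [sent_together] at most one chunk on a given port is sent per step. *)
Lemma sent_on_port_le1 (K : finType) (key : T * Rv -> K) s k :
  (forall e e', key e = key e' -> adjacent e e') ->
  (\sum_(c | is_chunk c) ((sent c == s) && (key (edge c.1) == k)) <= 1)%N.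
Proof.
move=> hkey; apply: sum_indicator_le1 => c1 c2 v1 v2 /andP [/eqP h1 /eqP k1] /andP [/eqP h2 /eqP k2].
by apply: sent_together; rewrite ?h1 ?h2 //; apply: hkey; rewrite k1 k2.
Qed.

(* An edge e has two ports, so at most 2 (tau - r) chunks adjacent to e are sent
   during [r, tau). *)
Lemma sent_adjacent_le (r tau : nat) e :
  (\sum_(c | is_chunk c) ((r <= sent c < tau)%N && adj_dec A c.1 e) <= 2 * (tau - r))%N.
Proof.
apply: (@leq_trans (\sum_(c | is_chunk c) \sum_(r <= s < tau)
           ((sent c == s) && adjacent (edge c.1) e))%N).
  apply: leq_sum => c hc; rewrite adj_dec_chunk //.
  case: (adjacent _ e); last by rewrite andbF.
  by under eq_bigr => s _ do rewrite andbT; rewrite sum_nat_eq_indicator andbT.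
rewrite exchange_big /= -[(2 * _)%N]mulnC -sum_nat_const_nat; apply: leq_sum => s _.
apply: (@leq_trans (\sum_(c | is_chunk c) ((sent c == s) && ((edge c.1).1 == e.1))
                   + \sum_(c | is_chunk c) ((sent c == s) && ((edge c.1).2 == e.2)))%N).
  rewrite -big_split /=; apply: leq_sum => c _; rewrite /adjacent.
  by case: (sent c == s); case: (_ == e.1); case: (_ == e.2).
rewrite -[2%N]/(1 + 1)%N; apply: leq_add.
  by apply: (@sent_on_port_le1 _ (@fst T Rv)) => e1 e2 he; rewrite /adjacent he eqxx.
by apply: (@sent_on_port_le1 _ (@snd T Rv)) => e1 e2 he; rewrite /adjacent he eqxx orbT.
Qed.

Lemma queue_terms_le p e tau : e \in Ep N p -> (rls N p <= tau)%N ->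
  wt N p * (Hcount N A p e)%:R + (dE N e)%:R * WL N A p e <=
  wt N p * (\sum_(c | is_chunk c) ((rls N p <= sent c < tau)%N && adj_dec A c.1 e) : nat)%:R
  + (dE N e)%:R * (pend (@fst T Rv) e.1 tau + pend (@snd T Rv) e.2 tau).
Proof.
move=> he hpt; have hd : 0 < (dE N e)%:R :> R by rewrite ltr0n (dE_pos he).
apply: (@le_trans _ _ (wt N p * (\sum_(c | is_chunk c)
     ((rls N p <= sent c < tau)%N && adj_dec A c.1 e) : nat)%:R
  + (dE N e)%:R * \sum_(c | is_chunk c)
       (if (rls N c.1 <= tau <= sent c)%N && adj_dec A c.1 e then cw N A c.1 else 0))).
  rewrite /Hcount /WL (big_chunks addn (fun p' => (rk N p' < rk N p)%N)
     (fun p' k => if [&& (rls N p <= tx A p' k)%N, adj_dec A p' e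
              & wt N p / (dE N e)%:R <= cw N A p'] then 1%N else 0%N)).
  rewrite (big_chunks _ (fun p' => (rk N p' < rk N p)%N)
     (fun p' k => if [&& (rls N p <= tx A p' k)%N, adj_dec A p' e
              & cw N A p' < wt N p / (dE N e)%:R] then cw N A p' else 0)).
  rewrite !natr_sum !mulr_sumr -!big_split /= big_mkcond [X in (_ <= X)]big_mkcond.
  apply: ler_sum => c _; rewrite andbC; case: (is_chunk c) => //=.
  case hr: (rk N c.1 < rk N p)%N => /=; last first.
    exact: threshold_charge_ge0 (ler0n _ _) (cw_ge0 _) (ltW (wt_gt0 _)).
  rewrite -/(sent c) (leq_trans (rk_rls hr) hpt) /= [(tau <= _)%N]leqNgt.
  exact: threshold_charge_le (cw_ge0 _) (wt_gt0 _).
apply: lerD => //; apply: ler_wpM2l; first exact: ltW.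
rewrite /pend -big_split /=; apply: ler_sum => c hc; rewrite adj_dec_chunk // /adjacent.
case: (rls N c.1 <= tau <= sent c)%N => /=; last by rewrite addr0.
case: (_ == e.1); case: (_ == e.2) => /=; rewrite ?addr0 ?add0r //.
by rewrite lerDl; exact: cw_ge0.
Qed.

Lemma charge_le_lp_term p e tau : e \in Ep N p -> (rls N p <= tau)%N ->
  charge p <= 2 * wt N p * ((tau + Delta N e)%:R - (rls N p)%:R)
             + (dE N e)%:R * (pend (@fst T Rv) e.1 tau + pend (@snd T Rv) e.2 tau).
Proof.
move=> he hpt; apply: le_trans (charge_le_imp he) _.
have hw := wt_gt0 p; set d : R := (dE N e)%:R.
apply: (@le_trans _ _ (wt N p * ((dST N e.1)%:R + (d + 1) / 2 + (dRD N e.2)%:R)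
   + (wt N p * (2 * (tau - rls N p)%:R)
      + d * (pend (@fst T Rv) e.1 tau + pend (@snd T Rv) e.2 tau)))).
  rewrite /imp -/d -addrA lerD2l; apply: le_trans (queue_terms_le he hpt) _.
  apply: lerD => //; apply: ler_wpM2l; first exact: ltW.
  by rewrite -natrM ler_nat; exact: sent_adjacent_le.
have -> : (tau + Delta N e)%:R - (rls N p)%:R =
          (tau - rls N p)%:R + (dST N e.1)%:R + d + (dRD N e.2)%:R :> R.
  by rewrite /Delta (natrB _ hpt) !natrD -/d; ring.
by apply: service_latency_le; rewrite ?ler0n ?ler1n ?(dE_pos he).
Qed.

(* Summed over all steps and ports, the pending weight is what ALG pays for
   waiting plus one step per chunk, hence at most ALG's cost. *)
Lemma pend_total_le_ALG (K : finType) (key : T * Rv -> K) (H : nat) :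
  \sum_(tau < H.+1) \sum_(k : K) pend key k tau <= ALGcost N A.
Proof.
apply: (@le_trans _ _ (\sum_(c | is_chunk c) cw N A c.1 * ((sent c - rls N c.1).+1)%:R)).
  rewrite /pend; under eq_bigr => tau _ do rewrite exchange_big /=.
  rewrite exchange_big /=; apply: ler_sum => c hc.
  rewrite (eq_bigr (fun tau : 'I_H.+1 =>
             cw N A c.1 * ((rls N c.1 <= tau <= sent c)%N : nat)%:R)); last first.
    move=> tau _; case: (rls N c.1 <= tau <= sent c)%N => /=; last by rewrite big1 ?mulr0.
    rewrite (bigD1 (key (edge c.1))) //= eqxx big1 ?addr0 ?mulr1 // => k hk.
    by rewrite eq_sym (negbTE hk).
  rewrite -mulr_sumr -natr_sum; apply: ler_wpM2l; first exact: cw_ge0.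
  by rewrite ler_nat; apply: leq_trans (sum_ord_interval_le _ _ _) _; lia.
rewrite /ALGcost (sum_chunks (fun p k => cw N A p * ((fin N A p k)%:R - (rls N p)%:R))).
rewrite -[X in X <= _]add0r; apply: lerD.
  by apply: sumr_ge0 => p _; rewrite mulr_ge0 // ltW // wt_gt0.
apply: ler_sum => c hc; rewrite (chunk_latency hc); apply: ler_wpM2l; first exact: cw_ge0.
by rewrite -natrD ler_nat; lia.
Qed.

Lemma pend_ge0 (K : finType) (key : T * Rv -> K) k tau : 0 <= pend key k tau.
Proof. by apply: sumr_ge0 => c _; case: ifP => // _; exact: cw_ge0. Qed.

Definition lp_sum (H : nat) (F : P -> T * Rv -> nat -> R) : R :=
  \sum_p \sum_(e in Ep N p) \sum_(rls N p <= tau < H.+1) F p e tau.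

Lemma lp_sum_le H F G :
  (forall p e tau, e \in Ep N p -> (rls N p <= tau <= H)%N -> F p e tau <= G p e tau) ->
  lp_sum H F <= lp_sum H G.
Proof.
move=> h; apply: ler_sum => p _; apply: ler_sum => e he; apply: ler_sum_nat => tau htau.
by apply: h => //; rewrite -ltnS.
Qed.

Lemma lp_sumD H F G :
  lp_sum H (fun p e tau => F p e tau + G p e tau) = lp_sum H F + lp_sum H G.
Proof.
rewrite /lp_sum -big_split; apply: eq_bigr => p _.
by rewrite -big_split; apply: eq_bigr => e _; rewrite -big_split.
Qed.

Lemma lp_sumZ H a F : lp_sum H (fun p e tau => a * F p e tau) = a * lp_sum H F.
Proof.
rewrite /lp_sum mulr_sumr; apply: eq_bigr => p _.
by rewrite mulr_sumr; apply: eq_bigr => e _; rewrite mulr_sumr.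
Qed.

Lemma lp_sum_by_time H F : lp_sum H F =
  \sum_(tau < H.+1) \sum_(e : T * Rv)
     \sum_(p | (rls N p <= tau)%N && (e \in Ep N p)) F p e tau.
Proof.
have -> : lp_sum H F = \sum_p \sum_(e : T * Rv) \sum_(tau < H.+1)
     (if (e \in Ep N p) && (rls N p <= tau)%N then F p e tau else 0).
  apply: eq_bigr => p _; rewrite big_mkcond; apply: eq_bigr => e _.
  case: (e \in Ep N p) => /=; last by rewrite big1.
  by rewrite big_geq_mkord big_mkcond.
under eq_bigr => p _ do rewrite exchange_big.
rewrite exchange_big /=; apply: eq_bigr => tau _.
rewrite exchange_big /=; apply: eq_bigr => e _.
by rewrite [RHS]big_mkcond; apply: eq_bigr => p _; rewrite andbC.
Qed.

Definition load (K : finType) (key : T * Rv -> K) (x : P -> T * Rv -> nat -> R)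
    (k : K) (tau : nat) : R :=
  \sum_(e | key e == k) \sum_(p | (rls N p <= tau)%N && (e \in Ep N p))
     (dE N e)%:R * x p e tau.

Lemma load_fst_le eps H x y t tau : LPfeasible N eps H x y -> (tau <= H)%N ->
  load (@fst T Rv) x t tau <= 1 / (2 + eps).
Proof. by case=> _ _ _ _ [hcap _] htau; rewrite /load sum_fst_fiber; exact: hcap. Qed.

Lemma load_snd_le eps H x y rv tau : LPfeasible N eps H x y -> (tau <= H)%N ->
  load (@snd T Rv) x rv tau <= 1 / (2 + eps).
Proof. by case=> _ _ _ _ [_ hcap] htau; rewrite /load sum_snd_fiber; exact: hcap. Qed.

Lemma pending_load_le (K : finType) (key : T * Rv -> K) H x (cap : R) :
  (forall k tau, (tau <= H)%N -> load key x k tau <= cap) ->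
  lp_sum H (fun p e tau => x p e tau * (dE N e)%:R * pend key (key e) tau)
  <= (\sum_(tau < H.+1) \sum_(k : K) pend key k tau) * cap.
Proof.
move=> hload; rewrite lp_sum_by_time mulr_suml; apply: ler_sum => tau _.
rewrite (partition_big key xpredT) //= mulr_suml; apply: ler_sum => k _.
have -> : \sum_(e | key e == k) \sum_(p | (rls N p <= tau)%N && (e \in Ep N p))
    x p e tau * (dE N e)%:R * pend key (key e) tau = pend key k tau * load key x k tau.
  rewrite /load mulr_sumr; apply: eq_bigr => e /eqP hk.
  by rewrite mulr_sumr; apply: eq_bigr => p _; rewrite hk mulrC [_%:R * _]mulrC.
by apply: ler_wpM2l; [exact: pend_ge0 | apply: hload; rewrite -ltnS].
Qed.

Lemma pending_term_le (K : finType) (key : T * Rv -> K) eps H x :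
  0 < eps -> (forall k tau, (tau <= H)%N -> load key x k tau <= 1 / (2 + eps)) ->
  lp_sum H (fun p e tau => x p e tau * (dE N e)%:R * pend key (key e) tau)
  <= ALGcost N A / (2 + eps).
Proof.
move=> heps hload; apply: le_trans (pending_load_le hload) _.
rewrite mul1r; apply: ler_wpM2r; last exact: pend_total_le_ALG.
by rewrite invr_ge0 addr_ge0 // ltW.
Qed.

Lemma charges_covered eps H x y : LPfeasible N eps H x y ->
  \sum_p charge p <=
  \sum_p charge p * sumx N H x p + \sum_(p | inPl N p) charge p * y p.
Proof.
case=> _ _ hcov hcov' _.
rewrite [X in _ <= _ + X]big_mkcond -big_split /=; apply: ler_sum => p _.
case hp: (inPl N p).
  by rewrite -mulrDr -{1}(mulr1 (charge p)) ler_wpM2l ?charge_ge0 ?hcov.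
by rewrite addr0 -{1}(mulr1 (charge p)) ler_wpM2l ?charge_ge0 // hcov' ?hp.
Qed.

Lemma charges_lp_weighted_le eps H x y : LPfeasible N eps H x y ->
  \sum_p charge p * sumx N H x p <=
  2 * lp_sum H (fun p e tau => wt N p * x p e tau * ((tau + Delta N e)%:R - (rls N p)%:R))
  + (lp_sum H (fun p e tau => x p e tau * (dE N e)%:R * pend (@fst T Rv) e.1 tau)
     + lp_sum H (fun p e tau => x p e tau * (dE N e)%:R * pend (@snd T Rv) e.2 tau)).
Proof.
case=> hx _ _ _ _.
have -> : \sum_p charge p * sumx N H x p = lp_sum H (fun p e tau => x p e tau * charge p).
  rewrite /lp_sum /sumx; apply: eq_bigr => p _; rewrite mulr_sumr; apply: eq_bigr => e _.
  by rewrite mulr_sumr; apply: eq_bigr => tau _; rewrite mulrC.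
rewrite -lp_sumZ -!lp_sumD; apply: lp_sum_le => p e tau he htau.
have [hpt _] := andP htau.
apply: le_trans (ler_wpM2l (hx p e tau he htau) (charge_le_lp_term he hpt)) _.
by rewrite le_eqVlt; apply/orP; left; apply/eqP; ring.
Qed.

Lemma charges_fixed_le eps H x y : LPfeasible N eps H x y ->
  \sum_(p | inPl N p) charge p * y p <= \sum_(p | inPl N p) wt N p * (ellp N p)%:R * y p.
Proof.
case=> _ hy _ _ _; apply: ler_sum => p hp.
rewrite [charge p * _]mulrC [X in _ <= X]mulrC.
by rewrite ler_wpM2l ?hy ?charge_le_fixed.
Qed.

Lemma ALG_le_lp_obj eps H x y : 0 < eps -> LPfeasible N eps H x y ->
  ALGcost N A <= 2 * (2 / eps + 1) * LPobj N H x y.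
Proof.
move=> heps hf; have he2 : 0 < 2 + eps by lra.
set q := ALGcost N A.
set lat := lp_sum H (fun p e tau =>
  wt N p * x p e tau * ((tau + Delta N e)%:R - (rls N p)%:R)).
set fixed := \sum_(p | inPl N p) wt N p * (ellp N p)%:R * y p.
have hfixed0 : 0 <= fixed.
  case: hf => _ hy _ _ _.
  by apply: sumr_ge0 => p hp; rewrite !mulr_ge0 ?hy // ltW // wt_gt0.
have hq : q <= 2 * lat + fixed + 2 * (q / (2 + eps)).
  have := pending_term_le heps (fun t tau => load_fst_le t hf).
  have := pending_term_le heps (fun rv tau => load_snd_le rv hf).
  have := charges_lp_weighted_le hf; have := charges_fixed_le hf.
  have := le_trans ALG_le_charges (charges_covered hf).
  rewrite -/q -/lat -/fixed; lra.
have -> : 2 * (2 / eps + 1) * LPobj N H x y = 2 * (2 + eps) * (lat + fixed) / eps.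
  by rewrite /LPobj -/(lp_sum _ _) -/lat -/fixed; field; rewrite gt_eqF.
rewrite ler_pdivlMr //.
have hqe : q / (2 + eps) * (2 + eps) = q by rewrite divfK // gt_eqF.
have := ler_wpM2r (ltW he2) hq; have := mulr_ge0 hfixed0 (ltW heps); lra.
Qed.

End Analysis.

(* Without the default edge: if there is no reconfigurable edge at all, there
   is no packet either (E(p) is nonempty), and both costs vanish. *)
Lemma ALG_competitive (R : realType) (S T Rv D P : finType)
    (N : network R S T Rv D P) (A : run T Rv P) (eps : R) (H : nat) x y :
  valid_network N -> is_ALG_run N A -> 0 < eps -> LPfeasible N eps H x y ->
  ALGcost N A <= 2 * (2 / eps + 1) * LPobj N H x y.
Proof.
move=> hN hA heps hf.
case: (pickP (fun _ : T * Rv => true)) => [e0 _ | hnone].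
  exact: (ALG_le_lp_obj hN hA e0 heps hf).
have hP (p : P) : False.
  by case: hN => _ _ _ /(_ p) [e _] _; have := hnone e.
rewrite /ALGcost /LPobj !big1 ?addr0 ?mulr0 // => p; case: (hP p).
Qed.

Theorem mainTheorem1 (R : realType) (S T Rv D P : finType)
    (N : network R S T Rv D P) (A : run T Rv P) (eps : R) (H : nat) :
  valid_network N -> is_ALG_run N A ->
  0 < eps -> (forall p, (rls N p <= H)%N) ->
  ((ALGcost N A)%:E <= (2 * (2 / eps + 1))%:E * LPval N eps H)%E.
Proof.
move=> hN hA heps _; set c := 2 * (2 / eps + 1).
have hc : 0 < c by rewrite /c mulr_gt0 // ltr_wpDl // divr_ge0 // ltW.
have hinf : ((ALGcost N A / c)%:E <= LPval N eps H)%E.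
  apply/ereal_infP => z [x [y [hf ->]]]; rewrite lee_fin mulrC ler_pdivrMl //.
  exact: ALG_competitive hN hA heps hf.
have -> : ALGcost N A = c * (ALGcost N A / c) by rewrite mulrC divfK // gt_eqF.
by rewrite EFinM lee_pmul2l // lte_fin.
Qed.
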